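(* Assume $\theta_i<1$ for all $i$ and $\theta_j>0$ for some $j$. Then the map $F:\Delta_n\to\Delta_n$, $F(x)=(I_n-\Theta)(I_n-W(x)^T\Theta)^{-1}\mathbf 1_n/n$, satisfies: (i) $F$ is differentiable on $\operatorname{int}\Delta_n$ and continuous on $\Delta_n$; (ii) its Jacobian is $\dfrac{\partial F}{\partial x}=(I_n-\Theta)(I_n-W(x)^T\Theta)^{-1}(I_n-C^T)\Theta(I_n-\Theta)^{-1}\mathrm{diag}(F(x))$; (iii) for every $x\in\Delta_n$ and every $i$, $\dfrac{1-\theta_i}{n}\le F_i(x)\le \dfrac{1+\zeta}{n}$, where $\zeta=n\theta_{\mathrm{ave}}-\theta_{\min}$.
   Context: Let $n\ge 2$, $\mathbf 1_n$ the all-ones vector, $I_n$ the identity matrix, $\Delta_n=\{x\in\mathbb R^n: x\ge 0,\ \mathbf 1_n^Tx=1\}$, $\operatorname{int}\Delta_n=\{x\in\mathbb R^n: x>0,\ \mathbf 1_n^Tx=1\}$. Let $C\in\mathbb R^{n\times n}$ be a nonnegative row-stochastic matrix with zero diagonal, $\theta\in[0,1]^n$, $\Theta=\mathrm{diag}(\theta)$, and for $x\in\mathbb R^n$, $W(x)=\mathrm{diag}(x)+(I_n-\mathrm{diag}(x))C$. Under the stated assumption on $\theta$, $I_n-W(x)^T\Theta$ is invertible for every $x\in\Delta_n$. Let $\theta_{\min}=\min_j\theta_j$ and $\theta_{\mathrm{ave}}=\frac1n\sum_{j=1}^n\theta_j$. *)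

From HB Require Import structures.
From mathcomp Require Import all_boot all_order all_algebra.
Set Implicit Arguments. Unset Strict Implicit. Unset Printing Implicit Defensive.
Import Order.TTheory GRing.Theory Num.Theory.
Local Open Scope ring_scope.

Section Defs.
Variables (R : realFieldType) (n : nat).

Definition diagc (v : 'cV[R]_n) : 'M[R]_n := diag_mx v^T.

Definition ones : 'cV[R]_n := const_mx 1.

Definition Wmat (C : 'M[R]_n) (x : 'cV[R]_n) : 'M[R]_n :=
  diagc x + (1%:M - diagc x) *m C.

Definition Fmap (C : 'M[R]_n) (theta : 'cV[R]_n) (x : 'cV[R]_n) : 'cV[R]_n :=
  (1%:M - diagc theta) *m invmx (1%:M - (Wmat C x)^T *m diagc theta)
    *m ((n%:R)^-1 *: ones).

Definition Jac (C : 'M[R]_n) (theta : 'cV[R]_n) (x : 'cV[R]_n) : 'M[R]_n :=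
  (1%:M - diagc theta) *m invmx (1%:M - (Wmat C x)^T *m diagc theta)
    *m (1%:M - C^T) *m diagc theta *m invmx (1%:M - diagc theta)
    *m diagc (Fmap C theta x).

Definition simplex (x : 'cV[R]_n) : Prop :=
  (forall i, 0 <= x i 0) /\ \sum_(i < n) x i 0 = 1.
Definition int_simplex (x : 'cV[R]_n) : Prop :=
  (forall i, 0 < x i 0) /\ \sum_(i < n) x i 0 = 1.

Definition vnorm (v : 'cV[R]_n) : R := \big[Num.max/0]_(i < n) `|v i 0|.

Definition continuous_on (D : 'cV[R]_n -> Prop) (f : 'cV[R]_n -> 'cV[R]_n) : Prop :=
  forall x, D x -> forall eps, 0 < eps ->
    exists2 delta, 0 < delta &
      forall y, D y -> vnorm (y - x) < delta -> vnorm (f y - f x) < eps.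

Definition frechet (f : 'cV[R]_n -> 'cV[R]_n) (x : 'cV[R]_n) (J : 'M[R]_n) : Prop :=
  forall eps, 0 < eps ->
    exists2 delta, 0 < delta &
      forall h, vnorm h < delta -> vnorm (f (x + h) - f x - J *m h) <= eps * vnorm h.

Definition differentiable_at (f : 'cV[R]_n -> 'cV[R]_n) (x : 'cV[R]_n) : Prop :=
  exists J, frechet f x J.

(* theta_min; the seed 1 is harmless since all theta_i <= 1 (and n >= 1) *)
Definition theta_min (theta : 'cV[R]_n) : R := \big[Num.min/1]_(i < n) theta i 0.
Definition theta_ave (theta : 'cV[R]_n) : R := (\sum_(i < n) theta i 0) / n%:R.
Definition zeta (theta : 'cV[R]_n) : R := n%:R * theta_ave theta - theta_min theta.

End Defs.

(* Write A(x) = W(x)^T Theta.  Column j of A(x) is nonnegative and sums to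
   theta_j whenever 0 <= x <= 1, so in the l1 operator norm A(x) is a
   contraction with factor theta_max = max_j theta_j < 1.  Hence I - A(x) is
   invertible and V(x) = (I - A(x))^{-1} 1/n is the fixed point of
   V = 1/n + A(x) V, with F(x) = (I - Theta) V(x).

   For the model, A is affine in x, A(x + h) = A(x) + E(h)
   with E(h) = (I - C^T) diag(h) Theta, so two applications of the fixed point
   estimate bound the second-order remainder of V by |h|^2: this gives (i),
   (ii) and continuity.  The bounds (iii) come from V >= 1/n (a nonnegative
   fixed point) and from sum_i F_i(x) = 1. *)
From HB Require Import structures.
From mathcomp Require Import all_boot all_order all_algebra.
From mathcomp Require Import lra ring.
Set Implicit Arguments. Unset Strict Implicit. Unset Printing Implicit Defensive.
Import Order.TTheory GRing.Theory Num.Theory.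
Local Open Scope ring_scope.

Section Norms.
Variables (R : realFieldType) (n : nat).
Implicit Types (A B : 'M[R]_n) (v w z : 'cV[R]_n).

Definition norm1 v : R := \sum_(i < n) `|v i 0|.

Definition colnorm_le A (q : R) := forall j, \sum_(i < n) `|A i j| <= q.

Lemma norm1_ge0 v : 0 <= norm1 v.
Proof. by apply: sumr_ge0 => i _; apply: normr_ge0. Qed.

Lemma norm1D v w : norm1 (v + w) <= norm1 v + norm1 w.
Proof. by rewrite /norm1 -big_split; apply: ler_sum => i _; rewrite mxE ler_normD. Qed.

Lemma norm1_eq0 z : norm1 z = 0 -> z = 0.
Proof.
move=> /eqP; rewrite psumr_eq0 => [/allP z0|i _]; last exact: normr_ge0.
apply/matrixP => i j; rewrite (ord1 j) mxE.
by apply/eqP; rewrite -normr_eq0; apply: z0; rewrite mem_index_enum.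
Qed.

Lemma norm1_mulmx A q v : colnorm_le A q -> norm1 (A *m v) <= q * norm1 v.
Proof.
move=> hA; rewrite /norm1.
apply: (@le_trans _ _ (\sum_(i < n) \sum_(j < n) `|A i j| * `|v j 0|)).
  apply: ler_sum => i _; rewrite mxE; apply: (le_trans (ler_norm_sum _ _ _)).
  by apply: ler_sum => j _; rewrite normrM.
rewrite exchange_big mulr_sumr; apply: ler_sum => j _.
by rewrite -mulr_suml; apply: ler_wpM2r; [apply: normr_ge0 | apply: hA].
Qed.

Lemma colnorm_mulmx A B a b :
  0 <= a -> colnorm_le A a -> colnorm_le B b -> colnorm_le (A *m B) (a * b).
Proof.
move=> ha hA hB j.
apply: (@le_trans _ _ (\sum_(i < n) \sum_(k < n) `|A i k| * `|B k j|)).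
  apply: ler_sum => i _; rewrite mxE; apply: (le_trans (ler_norm_sum _ _ _)).
  by apply: ler_sum => k _; rewrite normrM.
rewrite exchange_big /=; apply: (@le_trans _ _ (\sum_(k < n) a * `|B k j|)).
  apply: ler_sum => k _; rewrite -mulr_suml.
  by apply: ler_wpM2r; [exact: normr_ge0 | exact: hA].
by rewrite -mulr_sumr ler_wpM2l.
Qed.

Lemma colnorm_add A B a b :
  colnorm_le A a -> colnorm_le B b -> colnorm_le (A + B) (a + b).
Proof.
move=> hA hB j; apply: le_trans (lerD (hA j) (hB j)); rewrite -big_split.
by apply: ler_sum => i _; rewrite mxE ler_normD.
Qed.

Lemma colnorm_sub A B a b :
  colnorm_le A a -> colnorm_le B b -> colnorm_le (A - B) (a + b).
Proof.
move=> hA hB j; apply: le_trans (lerD (hA j) (hB j)); rewrite -big_split.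
by apply: ler_sum => i _; rewrite !mxE ler_normB.
Qed.

Lemma colnorm_diag (d : 'rV[R]_n) a :
  (forall j, `|d 0 j| <= a) -> colnorm_le (diag_mx d) a.
Proof.
move=> hd j; rewrite (bigD1 j) //= big1 => [|i /negbTE ij]; last first.
  by rewrite mxE ij mulr0n normr0.
by rewrite addr0 mxE eqxx mulr1n.
Qed.

Lemma colnorm_one : colnorm_le 1%:M 1.
Proof. by rewrite -diag_const_mx; apply: colnorm_diag => j; rewrite mxE normr1. Qed.

Lemma fixpoint_norm1 A q z w : colnorm_le A q -> z = w + A *m z ->
  norm1 z * (1 - q) <= norm1 w.
Proof.
move=> hA hz.
have : norm1 z <= norm1 w + q * norm1 z.
  by rewrite {1}hz; apply: le_trans (norm1D _ _) _; rewrite lerD2l norm1_mulmx.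
lra.
Qed.

Lemma contraction_unit A q : q < 1 -> colnorm_le A q -> 1%:M - A \in unitmx.
Proof.
move=> hq hA; rewrite -unitmx_tr unitmxE unitfE.
apply/negP => /det0P [v v0 hv]; move: v0; rewrite -trmx_eq0.
have hz : v^T = 0 + A *m v^T.
  move/(congr1 trmx): hv; rewrite trmx_mul trmxK trmx0 mulmxBl mul1mx.
  by move/eqP; rewrite subr_eq0 add0r => /eqP.
have := fixpoint_norm1 hA hz.
have -> : norm1 (0 : 'cV[R]_n) = 0 by rewrite /norm1 big1 // => i _; rewrite mxE normr0.
move=> hle; have := norm1_ge0 v^T => hge.
by rewrite (@norm1_eq0 v^T) ?eqxx //; nra.
Qed.

Lemma inv_fixpoint A w : 1%:M - A \in unitmx ->
  invmx (1%:M - A) *m w = w + A *m (invmx (1%:M - A) *m w).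
Proof.
move=> hu; set z := invmx _ *m w.
by have := mulKVmx hu w; rewrite -/z mulmxBl mul1mx => {1}<-; rewrite subrK.
Qed.

Lemma fixpoint_ge0 A z w q : q < 1 ->
  (forall i j, 0 <= A i j) -> (forall j, \sum_(i < n) A i j <= q) ->
  (forall i, 0 <= w i 0) -> z = w + A *m z -> forall i, 0 <= z i 0.
Proof.
move=> hq hA hc hw hz.
pose p i := Num.max 0 (- z i 0).
have p_ge0 i : 0 <= p i by rewrite le_max lexx.
have p_sub i : p i <= \sum_(j < n) A i j * p j.
  have sum_ge0 : 0 <= \sum_(j < n) A i j * p j by apply: sumr_ge0 => j _; exact: mulr_ge0.
  rewrite /p ge_max sum_ge0 {1}hz !mxE opprD.
  apply: (@le_trans _ _ (- \sum_j A i j * z j 0)); first by have := hw i; lra.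
  rewrite -sumrN; apply: ler_sum => j _; rewrite -mulrN.
  by apply: ler_wpM2l => //; rewrite le_max lexx orbT.
have hS : \sum_i p i <= q * \sum_i p i.
  apply: le_trans (ler_sum _ (fun i _ => p_sub i)) _.
  rewrite exchange_big mulr_sumr; apply: ler_sum => j _.
  by rewrite -mulr_suml; apply: ler_wpM2r.
have S_le0 : \sum_i p i <= 0 by have := sumr_ge0 _ (fun i _ => p_ge0 i); nra.
move=> i; have : p i <= 0.
  by apply: le_trans S_le0; rewrite (bigD1 i) //= lerDl sumr_ge0.
by rewrite /p ge_max lexx oppr_le0.
Qed.

Lemma vnorm_ge0 v : 0 <= vnorm v.
Proof. by rewrite /vnorm; elim/big_rec: _ => // i x _ hx; rewrite le_max hx orbT. Qed.

Lemma vnorm_ge v i : `|v i 0| <= vnorm v.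
Proof. exact: (le_bigmax 0 (fun i => `|v i 0|) i). Qed.

Lemma vnorm_le_norm1 v : vnorm v <= norm1 v.
Proof.
apply: bigmax_le; first exact: norm1_ge0.
by move=> i _; rewrite /norm1 (bigD1 i) //= lerDl sumr_ge0.
Qed.

Lemma vnormD v w : vnorm (v + w) <= vnorm v + vnorm w.
Proof.
apply: bigmax_le => [|i _]; first by rewrite addr_ge0 ?vnorm_ge0.
by rewrite mxE; apply: le_trans (ler_normD _ _) (lerD (vnorm_ge _ _) (vnorm_ge _ _)).
Qed.

Lemma vnorm_mulmx A v : vnorm (A *m v) <= (\sum_i \sum_j `|A i j|) * vnorm v.
Proof.
have sum_ge0 : 0 <= \sum_i \sum_j `|A i j|.
  by apply: sumr_ge0 => i _; apply: sumr_ge0 => j _; exact: normr_ge0.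
apply: bigmax_le => [|i _]; first by rewrite mulr_ge0 ?vnorm_ge0.
rewrite mxE; apply: le_trans (ler_norm_sum _ _ _) _.
apply: (@le_trans _ _ ((\sum_j `|A i j|) * vnorm v)).
  rewrite mulr_suml; apply: ler_sum => j _; rewrite normrM.
  by apply: ler_wpM2l; [exact: normr_ge0 | exact: vnorm_ge].
apply: ler_wpM2r; first exact: vnorm_ge0.
rewrite [leRHS](bigD1 i) //= lerDl; apply: sumr_ge0 => k _.
by apply: sumr_ge0 => j _; exact: normr_ge0.
Qed.

End Norms.

Section Calculus.
Variables (R : realFieldType) (n : nat).
Implicit Types (f : 'cV[R]_n -> 'cV[R]_n) (x : 'cV[R]_n) (J : 'M[R]_n).

Lemma frechet_of_quadratic f x J r K : 0 < r -> 0 <= K ->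
  (forall h, vnorm h < r -> vnorm (f (x + h) - f x - J *m h) <= K * vnorm h ^+ 2) ->
  frechet f x J.
Proof.
move=> r_gt0 K_ge0 hrem eps eps_gt0.
have K1_gt0 : 0 < K + 1 by lra.
exists (Num.min r (eps / (K + 1))) => [|h]; first by rewrite lt_min r_gt0 divr_gt0.
rewrite lt_min => /andP[hr]; rewrite ltr_pdivlMr // => heps.
apply: le_trans (hrem h hr) _; have := vnorm_ge0 h; rewrite expr2; nra.
Qed.

Lemma continuous_of_frechet (D : 'cV[R]_n -> Prop) f :
  (forall x, D x -> exists J, frechet f x J) -> continuous_on D f.
Proof.
move=> hdiff x Dx eps eps_gt0; have [J hJ] := hdiff x Dx.
have [d1 d1_gt0 hd1] := hJ 1 ltr01.
pose c := \sum_i \sum_j `|J i j|.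
have c_ge0 : 0 <= c by apply: sumr_ge0 => i _; apply: sumr_ge0 => j _; exact: normr_ge0.
have c1_gt0 : 0 < c + 1 by lra.
exists (Num.min d1 (eps / (c + 1))) => [|y _]; first by rewrite lt_min d1_gt0 divr_gt0.
rewrite lt_min => /andP[hy1]; rewrite ltr_pdivlMr // => hyeps.
have := hd1 _ hy1; rewrite [x + _]addrC subrK mul1r => hrem.
have hlin : vnorm (J *m (y - x)) <= c * vnorm (y - x) := vnorm_mulmx J (y - x).
have := vnormD (f y - f x - J *m (y - x)) (J *m (y - x)); rewrite subrK.
lra.
Qed.

(* The real arithmetic behind the quadratic remainder bound: with t = |h|,
   d = |V(x+h) - V(x)| and r the second-order remainder of V. *)
Lemma remainder_arith (q t K d r : R) : 0 <= t -> 4 * t < 1 - q -> 0 <= d ->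
  d * (1 - (q + 2 * t)) <= 2 * t * K -> r * (1 - q) <= 2 * t * d ->
  r * ((1 - q) * (1 - q)) <= 8 * t ^+ 2 * K.
Proof.
move=> t_ge0 small d_ge0 hd hr.
have dK : d * (1 - q) <= 4 * t * K.
  have : 0 <= d * (1 - q - 4 * t) by apply: mulr_ge0; lra.
  lra.
have : r * (1 - q) * (1 - q) <= 2 * t * d * (1 - q) by apply: ler_wpM2r; lra.
have : 2 * t * (d * (1 - q)) <= 2 * t * (4 * t * K) by apply: ler_wpM2l; lra.
rewrite expr2; lra.
Qed.

End Calculus.

Section Box.
Variables (R : realFieldType) (n : nat).
Implicit Types (x : 'cV[R]_n).

Definition unit_box x : Prop := forall i, 0 <= x i 0 <= 1.

Lemma simplex_box x : simplex x -> unit_box x.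
Proof. by move=> [x_ge0 x_sum] i; rewrite x_ge0 -x_sum (bigD1 i) //= lerDl sumr_ge0. Qed.

Lemma int_simplex_box x : int_simplex x -> unit_box x.
Proof. by move=> [x_gt0 x_sum]; apply: simplex_box; split=> // i; apply: ltW. Qed.

End Box.

Section Model.
Variables (R : realFieldType) (n : nat) (C : 'M[R]_n) (theta : 'cV[R]_n).
Hypotheses (C_ge0 : forall i j, 0 <= C i j) (C_rows : forall i, \sum_(j < n) C i j = 1)
  (theta01 : forall i, 0 <= theta i 0 <= 1) (theta_lt1 : forall i, theta i 0 < 1).
Implicit Types (x h : 'cV[R]_n).

Definition Amat x : 'M[R]_n := (Wmat C x)^T *m diagc theta.
Definition Emat h : 'M[R]_n := (1%:M - C^T) *m diagc h *m diagc theta.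
Definition uvec : 'cV[R]_n := (n%:R)^-1 *: ones R n.
Definition Vvec x : 'cV[R]_n := invmx (1%:M - Amat x) *m uvec.

Definition theta_max : R := \big[Num.max/0]_(i < n) theta i 0.

Lemma theta_max_ge j : theta j 0 <= theta_max.
Proof. exact: (le_bigmax 0 (fun i => theta i 0) j). Qed.

Lemma theta_max_lt1 : theta_max < 1.
Proof. by rewrite /theta_max; elim/big_rec: _ => // i x _ hx; rewrite gt_max hx theta_lt1. Qed.

Lemma WmatE x i j : Wmat C x i j = (i == j)%:R * x i 0 + (1 - x i 0) * C i j.
Proof. by rewrite /Wmat /diagc mulmxBl mul1mx mul_diag_mx !mxE mulrBl mul1r mulr_natl. Qed.

Lemma AmatE x i j : Amat x i j = Wmat C x j i * theta j 0.
Proof. by rewrite /Amat /diagc mul_mx_diag !mxE. Qed.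

Lemma Amat_add x h : Amat (x + h) = Amat x + Emat h.
Proof.
apply/matrixP => i j; rewrite [RHS]mxE !AmatE !WmatE /Emat /diagc !mul_mx_diag !mxE.
by rewrite [(i == j)]eq_sym; ring.
Qed.

Lemma Amat_ge0 x : unit_box x -> forall i j, 0 <= Amat x i j.
Proof.
move=> hx i j; rewrite AmatE WmatE.
have /andP[x0 x1] := hx j; have /andP[t0 _] := theta01 j.
by rewrite mulr_ge0 // addr_ge0 ?mulr_ge0 // subr_ge0.
Qed.

(* Column j of A(x) sums to theta_j, because the rows of W(x) are stochastic. *)
Lemma Amat_colsum x j : \sum_(i < n) Amat x i j = theta j 0.
Proof.
under eq_bigr do rewrite AmatE WmatE.
rewrite -mulr_suml big_split /= -mulr_sumr C_rows -big_distrl /= (bigD1 j) //=.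
rewrite big1 => [|i /negbTE ij]; last by rewrite eq_sym ij.
by rewrite eqxx addr0 mul1r mulr1 addrC subrK mul1r.
Qed.

Lemma colnorm_Amat x : unit_box x -> colnorm_le (Amat x) theta_max.
Proof.
move=> hx j; rewrite (eq_bigr (fun i => Amat x i j)) => [|i _].
  by rewrite Amat_colsum theta_max_ge.
by rewrite ger0_norm // Amat_ge0.
Qed.

Lemma colnorm_CT : colnorm_le C^T 1.
Proof.
move=> j; rewrite -(C_rows j) (eq_bigr (fun i => C j i)) // => i _.
by rewrite mxE ger0_norm.
Qed.

Lemma colnorm_Emat h : colnorm_le (Emat h) (2 * vnorm h).
Proof.
rewrite -[2 * vnorm h]mulr1; apply: colnorm_mulmx.
- by rewrite mulr_ge0 ?vnorm_ge0.
- apply: colnorm_mulmx => //.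
    by rewrite -[2]/(1 + 1); apply: colnorm_sub (@colnorm_one R n) colnorm_CT.
  by apply: colnorm_diag => j; rewrite mxE vnorm_ge.
- by apply: colnorm_diag => j; rewrite mxE ger0_norm; case/andP: (theta01 j).
Qed.

Lemma colnorm_IT : colnorm_le (1%:M - diagc theta) 2.
Proof.
rewrite -[2]/(1 + 1); apply: (colnorm_sub (@colnorm_one R n)); apply: colnorm_diag => j.
by rewrite mxE ger0_norm; case/andP: (theta01 j).
Qed.

Lemma unit_IT : 1%:M - diagc theta \in unitmx.
Proof.
apply: (contraction_unit theta_max_lt1); apply: colnorm_diag => j.
by rewrite mxE ger0_norm ?theta_max_ge //; case/andP: (theta01 j).
Qed.

Lemma unit_IA x : unit_box x -> 1%:M - Amat x \in unitmx.
Proof. by move=> hx; apply: contraction_unit theta_max_lt1 (colnorm_Amat hx). Qed.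

Lemma Vvec_fix x : unit_box x -> Vvec x = uvec + Amat x *m Vvec x.
Proof. by move=> hx; apply: inv_fixpoint; apply: unit_IA. Qed.

Lemma Fmap_Vvec x : Fmap C theta x = (1%:M - diagc theta) *m Vvec x.
Proof. by rewrite /Fmap /Vvec mulmxA. Qed.

Lemma FmapE x i : Fmap C theta x i 0 = (1 - theta i 0) * Vvec x i 0.
Proof. by rewrite Fmap_Vvec mulmxBl mul1mx /diagc mul_diag_mx !mxE; ring. Qed.

Lemma Jac_mulmx x h : Jac C theta x *m h =
  (1%:M - diagc theta) *m (invmx (1%:M - Amat x) *m (Emat h *m Vvec x)).
Proof.
set T := 1%:M - diagc theta.
have diag_swap (a b : 'cV[R]_n) : diagc a *m b = diagc b *m a.
  by apply/matrixP => i j; rewrite /diagc !mul_diag_mx !mxE (ord1 j) mulrC.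
have hT : diagc h *m T = T *m diagc h.
  by rewrite /T mulmxBl mulmxBr mul1mx mulmx1 /diagc diag_mxC.
rewrite /Jac -mulmxA diag_swap Fmap_Vvec -/T.
rewrite !mulmxA -[_ *m diagc h *m T]mulmxA hT mulmxA -[_ *m invmx T *m T]mulmxA.
rewrite (mulVmx unit_IT) mulmx1 -[_ *m diagc theta *m diagc h]mulmxA /diagc diag_mxC.
by rewrite /Emat /diagc /Amat !mulmxA.
Qed.

Lemma Vvec_increment (a b : 'cV[R]_n) x h :
  a = uvec + Amat (x + h) *m a -> b = uvec + Amat x *m b ->
  a - b = Emat h *m b + Amat (x + h) *m (a - b).
Proof.
move=> ha hb; rewrite {1}ha {1}hb mulmxBr Amat_add !mulmxDl.
set u := uvec; set Aa := Amat x *m a; set Ea := Emat h *m a.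
set Ab := Amat x *m b; set Eb := Emat h *m b.
by rewrite [u + (_ + _)]addrC addrKA opprD [Eb + _]addrC addrA subrK.
Qed.

Lemma Vvec_remainder (a b g : 'cV[R]_n) x h :
  a - b = Emat h *m b + Amat (x + h) *m (a - b) -> g = Emat h *m b + Amat x *m g ->
  a - b - g = Emat h *m (a - b) + Amat x *m (a - b - g).
Proof.
move=> hd hg; rewrite {1}hd {1}hg Amat_add mulmxDl [Amat x *m (_ - g)]mulmxBr.
set d := a - b; set Ad := Amat x *m d; set Ed := Emat h *m d.
set Eb := Emat h *m b; set Ag := Amat x *m g.
by rewrite [Eb + (_ + _)]addrC addrKA addrAC addrC.
Qed.

Lemma Fmap_quadratic x : unit_box x -> forall h, vnorm h < (1 - theta_max) / 4 ->
  vnorm (Fmap C theta (x + h) - Fmap C theta x - Jac C theta x *m h)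
    <= 16 * norm1 (Vvec x) / ((1 - theta_max) * (1 - theta_max)) * vnorm h ^+ 2.
Proof.
move=> hx h hsmall; have q_lt1 := theta_max_lt1.
have small : 4 * vnorm h < 1 - theta_max by rewrite mulrC -ltr_pdivlMr.
have t_ge0 := vnorm_ge0 h.
have hAx := colnorm_Amat hx.
have hAxh : colnorm_le (Amat (x + h)) (theta_max + 2 * vnorm h).
  by rewrite Amat_add; apply: colnorm_add hAx (colnorm_Emat h).
have qh_lt1 : theta_max + 2 * vnorm h < 1 by lra.
have fix_a : Vvec (x + h) = uvec + Amat (x + h) *m Vvec (x + h).
  by apply: inv_fixpoint; apply: contraction_unit qh_lt1 hAxh.
have fix_g := inv_fixpoint (Emat h *m Vvec x) (unit_IA hx).
rewrite Jac_mulmx (Fmap_Vvec (x + h)) (Fmap_Vvec x) -2!mulmxBr.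
move: fix_a (Vvec_fix hx) fix_g.
move: (Vvec x) (Vvec (x + h)) (invmx _ *m _) => b a g fix_a fix_b fix_g.
have hd := Vvec_increment fix_a fix_b.
have hr := Vvec_remainder hd fix_g.
have est_d := le_trans (fixpoint_norm1 hAxh hd) (norm1_mulmx b (colnorm_Emat h)).
have est_r := le_trans (fixpoint_norm1 hAx hr) (norm1_mulmx (a - b) (colnorm_Emat h)).
have est := remainder_arith t_ge0 small (norm1_ge0 _) est_d est_r.
have qq_gt0 : 0 < (1 - theta_max) * (1 - theta_max) by apply: mulr_gt0; lra.
have := le_trans (vnorm_le_norm1 _) (norm1_mulmx (a - b - g) colnorm_IT).
move=> /(ler_wpM2r (ltW qq_gt0)) est_F.
rewrite mulrAC ler_pdivlMr //; lra.
Qed.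

Lemma Fmap_frechet x : unit_box x -> frechet (Fmap C theta) x (Jac C theta x).
Proof.
move=> hx; have gap_ge0 : 0 <= 1 - theta_max by rewrite subr_ge0 ltW ?theta_max_lt1.
apply: (frechet_of_quadratic _ _ (Fmap_quadratic hx)).
  by apply: divr_gt0 => //; rewrite subr_gt0 theta_max_lt1.
by apply: divr_ge0; rewrite ?mulr_ge0 ?norm1_ge0.
Qed.

(* Every coordinate of V(x) is at least 1/n: V = 1/n + A V with A, V >= 0. *)
Lemma Vvec_ge x : (0 < n)%N -> unit_box x -> forall i, n%:R^-1 <= Vvec x i 0.
Proof.
move=> n_gt0 hx; have hV := Vvec_fix hx.
have u_ge0 i : 0 <= uvec i 0 by rewrite !mxE mulr1 invr_ge0 ler0n.
have col_le j : \sum_i Amat x i j <= theta_max by rewrite Amat_colsum theta_max_ge.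
have V_ge0 := fixpoint_ge0 theta_max_lt1 (Amat_ge0 hx) col_le u_ge0 hV.
move=> i; rewrite hV !mxE mulr1 lerDl; apply: sumr_ge0 => j _.
by rewrite mulr_ge0 ?Amat_ge0 ?V_ge0.
Qed.

Lemma Fmap_sum x : (0 < n)%N -> unit_box x -> \sum_(i < n) Fmap C theta x i 0 = 1.
Proof.
move=> n_gt0 hx; have hV := Vvec_fix hx.
have V_sum : \sum_i Vvec x i 0 = 1 + \sum_j theta j 0 * Vvec x j 0.
  rewrite {1}hV; under eq_bigr do rewrite !mxE mulr1.
  rewrite big_split /= sumr_const card_ord -[_ *+ n]mulr_natr mulVf ?pnatr_eq0 -?lt0n //.
  congr (_ + _); rewrite exchange_big /=; apply: eq_bigr => j _.
  by rewrite -mulr_suml Amat_colsum.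
under eq_bigr do rewrite FmapE mulrBl mul1r.
by rewrite sumrB V_sum addrK.
Qed.

(* Lower bound from V >= 1/n; upper bound since the other coordinates of the
   probability vector F(x) already carry at least (1 - theta_k)/n each. *)
Lemma Fmap_bounds x : (0 < n)%N -> simplex x -> forall i,
  (1 - theta i 0) / n%:R <= Fmap C theta x i 0 <= (1 + zeta theta) / n%:R.
Proof.
move=> n_gt0 /simplex_box hx.
have n_pos : 0 < n%:R :> R by rewrite ltr0n.
have lower k : (1 - theta k 0) / n%:R <= Fmap C theta x k 0.
  rewrite FmapE; apply: ler_wpM2l; last exact: Vvec_ge.
  by rewrite subr_ge0; case/andP: (theta01 k).
move=> i; rewrite lower /=.
have excess : Fmap C theta x i 0 - (1 - theta i 0) / n%:R <=
    \sum_k (Fmap C theta x k 0 - (1 - theta k 0) / n%:R).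
  by rewrite (bigD1 i) //= lerDl sumr_ge0 // => k _; rewrite subr_ge0.
rewrite sumrB Fmap_sum // -mulr_suml sumrB sumr_const card_ord in excess.
have min_le : theta_min theta <= theta i 0 := bigmin_le 1 i (fun k => theta k 0).
have zetaE : zeta theta = \sum_k theta k 0 - theta_min theta.
  by rewrite /zeta /theta_ave mulrC divfK ?gt_eqF.
have := ler_wpM2r (ltW n_pos) excess.
rewrite !mulrBl !mul1r !divfK ?mulVf ?gt_eqF // zetaE ler_pdivlMr //; lra.
Qed.

End Model.

Unset Implicit Arguments. Set Strict Implicit. Set Printing Implicit Defensive.

Theorem lemma2 (R : realFieldType) (n : nat) (C : 'M[R]_n) (theta : 'cV[R]_n) :
  (2 <= n)%N ->
  (forall i j, 0 <= C i j) ->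
  (forall i, \sum_(j < n) C i j = 1) ->
  (forall i, C i i = 0) ->
  (forall i, 0 <= theta i 0 <= 1) ->
  (forall i, theta i 0 < 1) ->
  (exists j, 0 < theta j 0) ->
  [/\ (forall x, int_simplex x -> differentiable_at (Fmap C theta) x),
      continuous_on (@simplex R n) (Fmap C theta),
      (forall x, int_simplex x -> frechet (Fmap C theta) x (Jac C theta x)) &
      (forall x, simplex x -> forall i,
         (1 - theta i 0) / n%:R <= Fmap C theta x i 0 <= (1 + zeta theta) / n%:R)].
Proof.
move=> n_ge2 C_ge0 C_rows _ theta01 theta_lt1 _.
have frechet_box x : unit_box x -> frechet (Fmap C theta) x (Jac C theta x).
  exact: Fmap_frechet.
split.
- by move=> x /int_simplex_box /frechet_box; exists (Jac C theta x).
- apply: continuous_of_frechet => x /simplex_box /frechet_box.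
  by exists (Jac C theta x).
- by move=> x /int_simplex_box; apply: frechet_box.
- by move=> x; apply: Fmap_bounds => //; apply: leq_trans n_ge2.
Qed.
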